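(* There exist a nondeterministic probabilistic automaton $\mathcal{B}$, a regular predicate $\varphi$ and an observation function $\mathcal{O}$ such that the value $\widehat{\mathrm{PO}^A_r}(\mathcal{B},\varphi,\mathcal{O}) = \min_{\sigma} \mathrm{PO}^A_r(\mathcal{B}_{/\sigma},\varphi,\mathcal{O})$ (minimum over all schedulers $\sigma$) cannot be reached by a memoryless scheduler.
   Context: A nondeterministic probabilistic automaton (NPA) is a tuple $\langle \Sigma, Q, \Delta, q_0 \rangle$ with $\Sigma$ a finite alphabet, $Q$ a finite set of states, $q_0$ the initial state, and $\Delta$ mapping each state to a finite set of probability distributions over $(\Sigma \times Q) \uplus \{\mathrm{stop}\}$, where $\mathrm{stop}$ is a special termination action. A scheduler is a function $\sigma$ from finite runs of the NPA to distributions over such distributions, with $\sigma(\rho)(\nu)>0$ only if $\nu \in \Delta(\text{last state of }\rho)$; it is memoryless if $\sigma(\rho)$ depends only on the last state of $\rho$. The scheduled automaton $\mathcal{B}_{/\sigma}$ is the (possibly infinite) fully probabilistic automaton whose states are runs, with $\Delta'(\rho)(a,\rho\xrightarrow{a}q') = \sum_{\mu \in \Delta(q)} \sigma(\rho)(\mu)\cdot\mu(a,q')$ ($q$ the last state of $\rho$), and similarly for termination. On a fully probabilistic automaton with distribution $\mathbf{P}$ on complete runs (finite runs followed by termination), restrictive probabilistic opacity is defined by $\frac{1}{\mathrm{PO}^A_r(\mathcal{A},\varphi,\mathcal{O})} = \sum_{o} \mathbf{P}(\mathcal{O}=o)/\mathbf{P}(\mathbf{1}_\varphi=0\mid\mathcal{O}=o)$.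 *)

From HB Require Import structures.
From mathcomp Require Import all_boot all_order all_algebra.
From mathcomp Require Import boolp classical_sets reals constructive_ereal ereal esum.
Set Implicit Arguments. Unset Strict Implicit. Unset Printing Implicit Defensive.
Import Order.TTheory GRing.Theory Num.Theory.
Local Open Scope classical_set_scope.
Local Open Scope ring_scope.

Section NPA.
Variable R : realType.
Variables (Sigma Q : finType).

(** An action: [Some (a, q')] = emit letter a and go to q'; [None] = stop. *)
Definition action := option (Sigma * Q).

Definition distr := {ffun action -> R}.

Definition is_distr (mu : distr) : bool :=
  [forall x, 0 <= mu x] && (\sum_x mu x == 1).

(** Nondeterministic probabilistic automaton <Sigma, Q, Delta, q0>;
    Delta q is a finite set of distributions, represented by a
    duplicate-free list (see npa_wf). *)
Record npa := NPA { q0 : Q; Delta : Q -> seq distr }.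

Definition npa_wf (B : npa) : Prop :=
  forall q, uniq (Delta B q) /\ (forall mu, mu \in Delta B q -> is_distr mu).

(** A finite run q0 -a1-> q1 ... -an-> qn is represented by the word
    [:: (a1,q1); ...; (an,qn)] (q0 is fixed). *)
Definition run := seq (Sigma * Q).

Definition last_state (B : npa) (r : run) : Q := last (q0 B) (map snd r).

Definition scheduler := run -> distr -> R.

Definition is_scheduler (B : npa) (s : scheduler) : Prop :=
  forall r : run,
    (forall nu, 0 <= s r nu) /\
    (forall nu, 0 < s r nu -> nu \in Delta B (last_state B r)) /\
    \sum_(nu <- Delta B (last_state B r)) s r nu = 1.

Definition memoryless (B : npa) (s : scheduler) : Prop :=
  forall r r' : run, last_state B r = last_state B r' -> s r = s r'.

(** Transition function Delta' of the scheduled automaton B_/s,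
    whose states are the runs of B. *)
Definition sched_trans (B : npa) (s : scheduler) (r : run) (x : action) : R :=
  \sum_(mu <- Delta B (last_state B r)) s r mu * mu x.

Fixpoint path_prob (B : npa) (s : scheduler) (pre : run) (w : run) : R :=
  match w with
  | [::] => 1
  | x :: w' => sched_trans B s pre (Some x) * path_prob B s (rcons pre x) w'
  end.

(** P of the complete run "r followed by stop" in B_/s (complete runs of
    B_/s are in bijection with finite runs of B). *)
Definition cprob (B : npa) (s : scheduler) (r : run) : R :=
  path_prob B s [::] r * sched_trans B s r None.

Definition P_obs (B : npa) (s : scheduler) (O : run -> nat) (o : nat) : \bar R :=
  \esum_(r in [set r | O r = o]) (cprob B s r)%:E.

Definition P_notphi_obs (B : npa) (s : scheduler) (phi : pred run)
    (O : run -> nat) (o : nat) : \bar R :=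
  \esum_(r in [set r | O r = o /\ ~~ phi r]) (cprob B s r)%:E.

Definition P_notphi_given (B : npa) (s : scheduler) (phi : pred run)
    (O : run -> nat) (o : nat) : R :=
  fine (P_notphi_obs B s phi O o) / fine (P_obs B s O o).

(** Summand P(O=o) / P(1_phi=0 | O=o); observations of probability 0
    do not contribute; division by a zero conditional probability gives +oo. *)
Definition PO_term (B : npa) (s : scheduler) (phi : pred run)
    (O : run -> nat) (o : nat) : \bar R :=
  if fine (P_obs B s O o) == 0 then 0%E
  else if P_notphi_given B s phi O o == 0 then +oo%E
  else (fine (P_obs B s O o) / P_notphi_given B s phi O o)%:E.

Definition inv_PO (B : npa) (s : scheduler) (phi : pred run) (O : run -> nat)
  : \bar R := \esum_(o in [set: nat]) PO_term B s phi O o.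

(** PO^A_r(B_/s, phi, O), with 1/(+oo) = 0. *)
Definition PO (B : npa) (s : scheduler) (phi : pred run) (O : run -> nat) : R :=
  if inv_PO B s phi O is r%:E then r^-1 else 0.

End NPA.

(** Deterministic finite automata, used for regular predicates on runs. *)
Record dfa (A : finType) := DFA {
  dstate : finType;
  dinit : dstate;
  dstep : dstate -> A -> dstate;
  dfinal : pred dstate }.

Definition accepts (A : finType) (D : dfa A) : pred (seq A) :=
  fun w => @dfinal A D (foldl (@dstep A D) (@dinit A D) w).

(* A fair coin produces a first letter c and leads to a single state in which
   the scheduler chooses the second letter d; then the run stops.  The secret
   is "d <> c" and nothing is observed, so the opacity equals P(d <> c).
   A scheduler with memory reads c off the run and copies it, reaching
   opacity 0.  A memoryless scheduler is in the same state whatever c was,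
   so it picks d independently of c and P(d <> c) = 1/2. *)
From HB Require Import structures.
From mathcomp Require Import all_boot all_order all_algebra.
From mathcomp Require Import boolp classical_sets reals constructive_ereal ereal esum.
From mathcomp Require Import cardinality fsbigop.
From mathcomp Require Import lra.
Set Implicit Arguments. Unset Strict Implicit. Unset Printing Implicit Defensive.
Import Order.TTheory GRing.Theory Num.Theory.
Local Open Scope classical_set_scope.
Local Open Scope ring_scope.

Lemma esum_fin_support (R : realType) (T : choiceType) (A : set T) (f : T -> R)
    (S : seq T) :
  uniq S -> (forall x, 0 <= f x) -> (forall x, x \notin S -> f x = 0) ->
  \esum_(x in A) (f x)%:E = (\sum_(x <- S) (if x \in A then f x else 0))%:E.
Proof.
move=> uS f_ge0 f_out.
rewrite esum_mkcond (_ : \esum_(x in [set: T]) _ =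
    \esum_(x in [set` S]) (if x \in A then (f x)%:E else 0%E)); last first.
  rewrite [RHS]esum_mkcond; apply: eq_esum => x _.
  have -> : (x \in [set` S]) = (x \in S) by apply/idP/idP => [/set_mem|/mem_set].
  by case: (boolP (x \in S)) => // xS; rewrite f_out // if_same.
rewrite esum_fset; first last.
- by move=> x _; case: ifP => //; rewrite lee_fin.
- exact: finite_seq.
by rewrite -fsbig_seq // -sumEFin; apply: eq_bigr => x _; case: ifP.
Qed.

Section PointDistr.
Variables (R : realType) (Sigma Q : finType).

Definition point_distr (a : action Sigma Q) : distr R Sigma Q :=
  [ffun x => (x == a)%:R].

Lemma is_distr_point a : is_distr (point_distr a).
Proof.
apply/andP; split; first by apply/forallP => x; rewrite ffunE ler0n.
rewrite (bigD1 a) //= ffunE eqxx big1 ?addr0 // => x /negbTE xa.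
by rewrite ffunE xa.
Qed.

Lemma point_distr_inj : injective point_distr.
Proof.
move=> a b /(congr1 (fun mu : distr R Sigma Q => mu a)).
rewrite !ffunE eqxx; case: eqP => // _ /eqP; by rewrite oner_eq0.
Qed.

End PointDistr.

Section ScheduledAutomaton.
Variables (R : realType) (Sigma Q : finType) (B : npa R Sigma Q).
Variable s : scheduler R Sigma Q.
Hypotheses (wfB : npa_wf B) (hs : is_scheduler B s).

Lemma sched_trans_ge0 r x : 0 <= sched_trans B s r x.
Proof.
rewrite /sched_trans big_seq; apply: sumr_ge0 => mu mu_in.
apply: mulr_ge0; first exact: (hs r).1.
by have /andP[/forallP ->] := (wfB _).2 mu mu_in.
Qed.

Lemma path_prob_ge0 pre w : 0 <= path_prob B s pre w.
Proof. by elim: w pre => //= x w IH pre; rewrite mulr_ge0 ?sched_trans_ge0. Qed.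

Lemma cprob_ge0 r : 0 <= cprob B s r.
Proof. by rewrite mulr_ge0 ?path_prob_ge0 ?sched_trans_ge0. Qed.

Lemma sched_trans_single r mu :
  Delta B (last_state B r) = [:: mu] -> sched_trans B s r =1 mu.
Proof.
move=> Dr x; have [_ [_]] := hs r.
by rewrite /sched_trans Dr !big_seq1 => ->; rewrite mul1r.
Qed.

(* With a constant observation the only summand of 1/PO is
   1 / P(not phi), so PO is P(not phi) itself. *)
Lemma PO_const_obs phi :
  \esum_(r in [set: run Sigma Q]) (cprob B s r)%:E = 1%E ->
  PO B s phi (fun=> 0%N) = fine (P_notphi_obs B s phi (fun=> 0%N) 0).
Proof.
move=> total; set g := fine _.
have g_ge0 : 0 <= g.
  by apply: fine_ge0; apply: esum_ge0 => r _; rewrite lee_fin cprob_ge0.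
have P_obsE o : P_obs B s (fun=> 0%N) o = if o == 0%N then 1%E else 0%E.
  rewrite /P_obs; case: eqP => [->|o0]; last by rewrite esum1 // => r /= /esym.
  by rewrite -total; congr esum; apply/seteqP; split.
have termE o : PO_term B s phi (fun=> 0%N) o =
    if o \in [set 0%N] then (if g == 0 then +oo%E else g^-1%:E) else 0%E.
  rewrite /PO_term /P_notphi_given !P_obsE; case: (o =P 0%N) => [-> | o0].
    by rewrite mem_set //= oner_eq0 divr1 div1r.
  by rewrite memNset //= eqxx.
rewrite /PO /inv_PO (eq_esum (fun o _ => termE o)) -esum_mkcond esum_set1; last first.
  by case: eqP => // _; rewrite lee_fin invr_ge0.
by case: eqP => [->|_] //; rewrite invrK.
Qed.

End ScheduledAutomaton.

Section CoinExample.
Variable R : realType.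

Local Notation Q := (option bool).
Local Notation qstart := (None : Q).
Local Notation qguess := (Some false : Q).
Local Notation qdone := (Some true : Q).
Local Notation D := (distr R bool Q).

Definition coin_toss : D :=
  [ffun x => if x is Some (_, q) then (q == qguess)%:R / 2 else 0].

Definition guess (d : bool) : D := point_distr R (Some (d, qdone)).

Definition coin_delta (q : Q) : seq D :=
  match q with
  | None => [:: coin_toss]
  | Some false => [:: guess true; guess false]
  | Some true => [:: point_distr R None]
  end.

Definition coin_npa : npa R bool Q := NPA qstart coin_delta.

Lemma guess_inj : injective guess.
Proof. by move=> c d /point_distr_inj [->]. Qed.

Lemma is_distr_coin_toss : is_distr coin_toss.
Proof.
apply/andP; split.
  by apply/forallP => -[[c q]|]; rewrite ffunE // divr_ge0 ?ler0n.
rewrite (bigD1 (Some (true, qguess))) // (bigD1 (Some (false, qguess))) //=.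
rewrite big1 => [|[[[] [[]|]]|] //= _]; rewrite !ffunE /= ?mul0r //.
by apply/eqP; lra.
Qed.

Lemma coin_npa_wf : npa_wf coin_npa.
Proof.
move=> q; split.
  by case: q => [[]|] //=; rewrite inE (inj_eq guess_inj).
case: q => [[]|] mu /=; rewrite !inE.
- by move=> /eqP ->; apply: is_distr_point.
- by case/orP => /eqP ->; apply: is_distr_point.
- by move=> /eqP ->; apply: is_distr_coin_toss.
Qed.

Definition run2 (c d : bool) : run bool Q := [:: (c, qguess); (d, qdone)].

Definition two_letter_runs : seq (run bool Q) :=
  [:: run2 true true; run2 true false; run2 false true; run2 false false].

Section Scheduler.
Variable s : scheduler R bool Q.
Hypothesis hs : is_scheduler coin_npa s.

Let trans_start r : last_state coin_npa r = qstart ->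
  sched_trans coin_npa s r =1 coin_toss.
Proof. by move=> rq; apply: (sched_trans_single hs); rewrite rq. Qed.

Let trans_done r : last_state coin_npa r = qdone ->
  sched_trans coin_npa s r =1 point_distr R None.
Proof. by move=> rq; apply: (sched_trans_single hs); rewrite rq. Qed.

Let trans_guess r x : last_state coin_npa r = qguess ->
  sched_trans coin_npa s r x =
  s r (guess true) * guess true x + s r (guess false) * guess false x.
Proof. by move=> rq; rewrite /sched_trans rq /= !big_cons big_nil addr0. Qed.

Lemma guess_sum r : last_state coin_npa r = qguess ->
  s r (guess true) + s r (guess false) = 1.
Proof. by move=> rq; have [_ [_]] := hs r; rewrite rq /= !big_cons big_nil addr0. Qed.

Lemma cprob_run2 c d : cprob coin_npa s (run2 c d) = 2^-1 * s [:: (c, qguess)] (guess d).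
Proof.
rewrite /cprob /= trans_start // trans_guess // trans_done // !ffunE /= div1r.
by case: d; rewrite /= !mulr1 !mulr0 ?addr0 ?add0r.
Qed.

Lemma cprob_out r : r \notin two_letter_runs -> cprob coin_npa s r = 0.
Proof.
rewrite /cprob; case: r => [|[c q] r] /=; first by rewrite trans_start // ffunE mulr0.
rewrite trans_start // ffunE; case: (q =P qguess) => [-> | _]; last by rewrite !mul0r.
case: r => [|[d q'] r] /=.
  by rewrite trans_guess // !ffunE /= !mulr0 addr0 mulr0.
rewrite trans_guess // !ffunE /=; have [-> | q'_ne] := eqVneq q' qdone; last first.
  rewrite !(inj_eq Some_inj) !xpair_eqE (negbTE q'_ne) !andbF.
  by rewrite !mulr0 addr0 mul0r mulr0 mul0r.
case: r => [|x r]; first by case: c; case: d.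
by rewrite /= trans_done // ffunE mul0r !mulr0 mul0r.
Qed.

Lemma esum_cprob (A : set (run bool Q)) :
  \esum_(r in A) (cprob coin_npa s r)%:E =
  (\sum_(r <- two_letter_runs) (if r \in A then cprob coin_npa s r else 0))%:E.
Proof.
apply: esum_fin_support => //; first exact: cprob_ge0 coin_npa_wf hs.
exact: cprob_out.
Qed.

Lemma coin_total : \esum_(r in [set: run bool Q]) (cprob coin_npa s r)%:E = 1%E.
Proof.
rewrite esum_cprob !big_cons big_nil !in_setT !cprob_run2; congr _%:E.
have := @guess_sum [:: (true, qguess)] erefl.
have := @guess_sum [:: (false, qguess)] erefl.
lra.
Qed.

End Scheduler.

Definition same_letters_dfa : dfa (bool * Q)%type :=
  @DFA _ (option bool * bool)%type (None, false)
    (fun st a => if st.1 is Some c then (Some c, c == a.1) else (Some a.1, false))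
    snd.

Lemma accepts_run2 c d : accepts same_letters_dfa (run2 c d) = (c == d).
Proof. by []. Qed.

Lemma PO_coinE s : is_scheduler coin_npa s ->
  PO coin_npa s (accepts same_letters_dfa) (fun=> 0%N) =
  2^-1 * (s [:: (true, qguess)] (guess false) + s [:: (false, qguess)] (guess true)).
Proof.
move=> hs; rewrite PO_const_obs ?coin_total //; last exact: coin_npa_wf.
rewrite /P_notphi_obs esum_cprob // !big_cons big_nil /=.
have memE r : (r \in [set r | 0%N = 0%N /\ ~~ accepts same_letters_dfa r]) =
    ~~ accepts same_letters_dfa r.
  by apply/idP/idP => [/set_mem[] //|?]; apply/mem_set.
rewrite !memE !accepts_run2 /= !cprob_run2 //.
by rewrite add0r !addr0 mulrDr.
Qed.

(* A run ending in [qguess] is [:: (c, qguess)], whose first letter is the coin. *)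
Definition copy_sched : scheduler R bool Q := fun r nu =>
  if last_state coin_npa r == qguess then (nu == guess (head true (map fst r)))%:R
  else (nu == head (point_distr R None) (coin_delta (last_state coin_npa r)))%:R.

Lemma copy_sched_is_scheduler : is_scheduler coin_npa copy_sched.
Proof.
move=> r; rewrite /copy_sched; split; [|split].
- by move=> nu; case: ifP; rewrite ler0n.
- move=> nu; case: ifP => [/eqP -> | _]; rewrite ltr0n lt0b => /eqP ->.
    by case: (head _ _); rewrite !inE eqxx ?orbT.
  by case: (last_state _ r) => [[]|]; rewrite !inE eqxx ?orbT.
- case: (last_state _ r) => [[]|] /=; rewrite ?big_seq1 ?eqxx //.
  rewrite !big_cons big_nil addr0 !(inj_eq guess_inj).
  by case: (head _ _); rewrite /= ?addr0 ?add0r.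
Qed.

Lemma PO_copy_sched : PO coin_npa copy_sched (accepts same_letters_dfa) (fun=> 0%N) = 0.
Proof.
rewrite PO_coinE; last exact: copy_sched_is_scheduler.
by rewrite /copy_sched /= !(inj_eq guess_inj) /= addr0 mulr0.
Qed.

Lemma PO_memoryless s : is_scheduler coin_npa s -> memoryless coin_npa s ->
  PO coin_npa s (accepts same_letters_dfa) (fun=> 0%N) = 2^-1.
Proof.
move=> hs mem_s; rewrite PO_coinE // (mem_s [:: (false, qguess)] [:: (true, qguess)]) //.
by rewrite addrC guess_sum // mulr1.
Qed.

End CoinExample.

Theorem theorem2 (R : realType) :
  exists (Sigma Q : finType) (B : npa R Sigma Q) (phi : dfa (prod Sigma Q))
         (O : run Sigma Q -> nat),
    npa_wf B /\
    (forall s, is_scheduler B s ->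
       \esum_(r in [set: run Sigma Q]) (cprob B s r)%:E = 1%E) /\
    exists s0, is_scheduler B s0 /\
      (forall s, is_scheduler B s -> PO B s0 (accepts phi) O <= PO B s (accepts phi) O) /\
      (forall sm, is_scheduler B sm -> memoryless B sm ->
         PO B s0 (accepts phi) O < PO B sm (accepts phi) O).
Proof.
exists bool, (option bool), (coin_npa R), same_letters_dfa, (fun=> 0%N).
split; first exact: coin_npa_wf.
split; first exact: coin_total.
exists (@copy_sched R); split; first exact: copy_sched_is_scheduler.
rewrite PO_copy_sched; split => [s hs | sm hs mem_sm].
- rewrite (PO_coinE hs); apply: mulr_ge0; first by rewrite invr_ge0 ler0n.
  by apply: addr_ge0; apply: (hs _).1.
- by rewrite (PO_memoryless hs mem_sm) invr_gt0.
Qed.
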